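(* Let $(\mathbb{P},\leq)$ be a lattice with enough prime elements, and let $p\in\mathbb{P}$. Then $\mathsf{S}_{\mathrm{fin}}(\mathbb{V}_p,\mathbb{V}_p)$ holds if and only if Player I does not have a winning strategy in the game $\mathsf{G}_{\mathrm{fin}}(\mathbb{V}_p,\mathbb{V}_p)$.
   Context: A lattice is a poset in which every two elements $a,b$ have a supremum $a\vee b$ and an infimum $a\wedge b$. For $p\in\mathbb{P}$, $\mathbb{V}_p$ denotes the family of all subsets $A\subseteq\mathbb{P}$ such that $\sup A$ exists and equals $p$. A prime element of $\mathbb{P}$ is an element $q\in\mathbb{P}$ (required to be different from the maximum $1$ if $\mathbb{P}$ is bounded) such that for all $a,b\in\mathbb{P}$, $a\wedge b\leq q$ implies $a\leq q$ or $b\leq q$. $\mathbb{P}$ has enough prime elements if whenever $a,b\in\mathbb{P}$ satisfy $a\not\leq b$, there is a prime element $q$ with $b\leq q$ and $a\not\leq q$. For families $\mathcal{A},\mathcal{B}$ of subsets of $\mathbb{P}$: $\mathsf{S}_{\mathrm{fin}}(\mathcal{A},\mathcal{B})$ means that for every sequence $(A_n)_{n\in\omega}$ of members of $\mathcal{A}$ there are finite sets $F_n\subseteq A_n$ with $\bigcup_{n\in\omega}F_n\in\mathcal{B}$. The game $\mathsf{G}_{\mathrm{fin}}(\mathcal{A},\mathcal{B})$ has innings $n\in\omega$: in inning $n$ Player I plays some $A_n\in\mathcal{A}$ and Player II responds with a finite $F_n\subseteq A_n$; Player II wins the play if $\bigcup_{n\in\omega}F_n\in\mathcal{B}$, otherwise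 Player I wins. A strategy for Player I is a rule assigning Player I's move to each finite sequence of Player II's previous moves; it is winning if Player I wins every play following it. *)

From Stdlib Require Import List.
Import ListNotations.

Section Defs.

Context {T : Type} (le : T -> T -> Prop).

Definition is_partial_order : Prop :=
  (forall x, le x x) /\
  (forall x y z, le x y -> le y z -> le x z) /\
  (forall x y, le x y -> le y x -> x = y).

Definition is_sup (A : T -> Prop) (s : T) : Prop :=
  (forall a, A a -> le a s) /\ (forall u, (forall a, A a -> le a u) -> le s u).

Definition is_inf (A : T -> Prop) (m : T) : Prop :=
  (forall a, A a -> le m a) /\ (forall u, (forall a, A a -> le u a) -> le u m).

Definition pair_set (a b : T) : T -> Prop := fun x => x = a \/ x = b.

Definition is_lattice : Prop :=
  is_partial_order /\
  (forall a b, exists s, is_sup (pair_set a b) s) /\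
  (forall a b, exists m, is_inf (pair_set a b) m).

Definition Vp (p : T) (A : T -> Prop) : Prop := is_sup A p.

(* q is not the maximum of P (this is vacuous if P has no maximum) *)
Definition prime_elt (q : T) : Prop :=
  ~ (forall x, le x q) /\
  (forall a b m, is_inf (pair_set a b) m -> le m q -> le a q \/ le b q).

Definition enough_primes : Prop :=
  forall a b, ~ le a b -> exists q, prime_elt q /\ le b q /\ ~ le a q.

Definition finite_set (F : T -> Prop) : Prop :=
  exists l : list T, forall x, F x <-> In x l.

Definition subset (F A : T -> Prop) : Prop := forall x, F x -> A x.

Definition bigunion (F : nat -> T -> Prop) : T -> Prop :=
  fun x => exists n, F n x.

Definition S_fin (cA cB : (T -> Prop) -> Prop) : Prop :=
  forall A : nat -> T -> Prop, (forall n, cA (A n)) ->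
  exists F : nat -> T -> Prop,
    (forall n, finite_set (F n) /\ subset (F n) (A n)) /\ cB (bigunion F).

(* A strategy for Player I in G_fin(calA, calB): assigns to each finite
   sequence [F_0; ...; F_{n-1}] of Player II's previous moves Player I's
   move in inning n, which must be a member of calA. *)
Definition strategyI (cA : (T -> Prop) -> Prop)
  (sigma : list (T -> Prop) -> T -> Prop) : Prop :=
  forall h, cA (sigma h).

Definition history (F : nat -> T -> Prop) (n : nat) : list (T -> Prop) :=
  map F (seq 0 n).

Definition follows (sigma : list (T -> Prop) -> T -> Prop)
  (F : nat -> T -> Prop) : Prop :=
  forall n, finite_set (F n) /\ subset (F n) (sigma (history F n)).

Definition winning_I (cA cB : (T -> Prop) -> Prop)
  (sigma : list (T -> Prop) -> T -> Prop) : Prop :=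
  strategyI cA sigma /\
  forall F, follows sigma F -> ~ cB (bigunion F).

Definition I_has_winning (cA cB : (T -> Prop) -> Prop) : Prop :=
  exists sigma, winning_I cA cB sigma.

End Defs.

(* The primes q with p not below q form a space whose basic open sets
   U_a = {q | a not below q}, for a <= p, are closed under finite intersections
   (U_a /\ U_b = U_(a meet b) because q is prime).  With enough primes, A lies
   in V_p exactly when A <= p and the U_a (a in A) cover this space, so
   S_fin(V_p, V_p) is the Menger property of the space for basic covers, and
   Hurewicz's argument applies.  Against a strategy of Player I, split each of
   its moves into finite pieces whose union is still in V_p; answering with
   the first m pieces along every finite sequence of bounds m gives countably
   many increasing open covers, the Menger property picks one bound per cover,
   and a diagonal speed-up of these bounds is a play won by Player II.
   Conversely, if S_fin fails for (A_n), Player I wins by playing A_n in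
   inning n. *)

From Stdlib Require Import List Arith Lia ClassicalEpsilon.
Import ListNotations.

Lemma bound_in_list {A} (P : A -> nat -> Prop) (l : list A) :
  (forall a m m', m <= m' -> P a m -> P a m') ->
  (forall a, In a l -> exists m, P a m) -> exists m, forall a, In a l -> P a m.
Proof.
  intros Hmono. induction l as [|a l IH]; intros Hall.
  - exists 0. intros a [].
  - destruct (Hall a (or_introl eq_refl)) as [m1 Hm1].
    destruct IH as [m2 Hm2]; [intros b Hb; apply Hall; right; exact Hb|].
    exists (Nat.max m1 m2). intros b [<-|Hb].
    + apply (Hmono a m1); [lia|exact Hm1].
    + apply (Hmono b m2); [lia|apply Hm2; exact Hb].
Qed.

Fixpoint lists_upto (L n : nat) : list (list nat) :=
  match L with
  | 0 => [[]]
  | S L => [] :: flat_map (fun i => map (cons i) (lists_upto L n)) (seq 0 n)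
  end.

Lemma in_lists_upto L n s :
  In s (lists_upto L n) <-> length s <= L /\ forall x, In x s -> x < n.
Proof.
  revert s; induction L as [|L IH]; intros [|i s]; simpl.
  - split; [intros _; split; [lia|intros x []]|auto].
  - split; [intros [H|[]]; discriminate|lia].
  - split; [intros _; split; [lia|intros x []]|auto].
  - rewrite in_flat_map. split.
    + intros [[=]|[j [Hj Hs]]]. apply in_map_iff in Hs.
      destruct Hs as [s' [[= <- <-] Hs']]. apply IH in Hs'. apply in_seq in Hj.
      split; [lia|]. intros x [<-|Hx]; [lia|apply Hs'; exact Hx].
    + intros [Hlen Hs]. right. exists i. split.
      * apply in_seq. specialize (Hs i (or_introl eq_refl)). lia.
      * apply in_map. apply IH. split; [lia|]. intros x Hx. apply Hs. right. exact Hx.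
Qed.

Fixpoint prefix_max (g : nat -> nat) (n : nat) : nat :=
  match n with 0 => g 0 | S n => Nat.max (prefix_max g n) (g (S n)) end.

Fixpoint stage (g : nat -> nat) (k : nat) : nat :=
  match k with
  | 0 => 0
  | S k => Nat.max (S (stage g k)) (prefix_max g (stage g k))
  end.

Lemma le_prefix_max g i n : i <= n -> g i <= prefix_max g n.
Proof.
  induction n as [|n IH]; intros Hi; simpl.
  - replace i with 0 by lia. lia.
  - destruct (Nat.eq_dec i (S n)) as [->|Hne]; [lia|]. specialize (IH ltac:(lia)). lia.
Qed.

Lemma stage_le_S g k : S (stage g k) <= stage g (S k).
Proof. apply Nat.le_max_l. Qed.

Lemma prefix_max_le_stage g k : prefix_max g (stage g k) <= stage g (S k).
Proof. apply Nat.le_max_r. Qed.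

Lemma stage_mono g k k' : k <= k' -> stage g k <= stage g k'.
Proof. induction 1 as [|k' _ IH]; [lia|]. pose proof (stage_le_S g k'). lia. Qed.

Lemma le_stage g k : k <= stage g k.
Proof. induction k as [|k IH]; [lia|]. pose proof (stage_le_S g k). lia. Qed.

Lemma stage_interval g n : exists k, stage g k <= n < stage g (S k).
Proof.
  induction n as [|n [k Hk]].
  - exists 0. pose proof (stage_le_S g 0). simpl (stage g 0) in *. lia.
  - destruct (Nat.eq_dec (S n) (stage g (S k))) as [E|E].
    + exists (S k). pose proof (stage_le_S g (S k)). lia.
    + exists k. lia.
Qed.

(* The intermediate [c] is essential: [g n] need not lie below the stage
   following [n], but it lies below the stage after next. *)
Lemma stage_diagonal (H : nat -> nat -> Prop) (g : nat -> nat) :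
  (forall c c' m, c <= c' -> H c' m -> H c m) ->
  (forall c m m', m <= m' -> H c m -> H c m') ->
  (exists n c, H n c /\ H c (g n)) -> exists k, H (stage g k) (stage g (S k)).
Proof.
  intros Hanti Hmono [n [c [Hnc Hcg]]].
  destruct (stage_interval g n) as [k Hk].
  destruct (Nat.lt_ge_cases c (stage g (S k))) as [Hc|Hc].
  - exists k. apply (Hmono _ c); [lia|]. apply (Hanti _ n); [lia|exact Hnc].
  - exists (S k). apply (Hmono _ (g n)).
    + pose proof (le_prefix_max g n (stage g (S k)) ltac:(lia)).
      pose proof (prefix_max_le_stage g (S k)). lia.
    + apply (Hanti _ c); [exact Hc|exact Hcg].
Qed.

Lemma S_fin_ext {T} (cA cA' cB cB' : (T -> Prop) -> Prop) :
  (forall A, cA A <-> cA' A) -> (forall B, cB B <-> cB' B) ->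
  S_fin cA cB -> S_fin cA' cB'.
Proof.
  intros HA HB HS A HA'. destruct (HS A) as [F [HF HFB]].
  - intro n. apply HA, HA'.
  - exists F. split; [exact HF|apply HB, HFB].
Qed.

Lemma I_has_winning_ext {T} (cA cA' cB cB' : (T -> Prop) -> Prop) :
  (forall A, cA A <-> cA' A) -> (forall B, cB B <-> cB' B) ->
  I_has_winning cA cB -> I_has_winning cA' cB'.
Proof.
  intros HA HB [sigma [Hst Hwin]]. exists sigma. split.
  - intro h. apply HA, Hst.
  - intros F HF HFB. apply (Hwin F HF), HB, HFB.
Qed.

Lemma S_fin_of_not_I_has_winning {T} (cA cB : (T -> Prop) -> Prop) :
  ~ I_has_winning cA cB -> S_fin cA cB.
Proof.
  intros HnW A HA. apply NNPP. intros HnS. apply HnW.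
  exists (fun h => A (length h)). split; [intro h; apply HA|].
  intros F HF HFB. apply HnS. exists F. split; [|exact HFB].
  intro n. destruct (HF n) as [Hfin Hsub]. split; [exact Hfin|].
  unfold history in Hsub. rewrite length_map, length_seq in Hsub. exact Hsub.
Qed.

Definition partial_union {T} (F : nat -> T -> Prop) (m : nat) : T -> Prop :=
  fun x => exists i, i <= m /\ F i x.

Lemma partial_union_mono {T} (F : nat -> T -> Prop) m m' :
  m <= m' -> subset (partial_union F m) (partial_union F m').
Proof. intros Hm x [i [Hi Hx]]. exists i. split; [lia|exact Hx]. Qed.

Lemma partial_union_finite {T} (F : nat -> T -> Prop) m :
  (forall i, finite_set (F i)) -> finite_set (partial_union F m).
Proof.
  intros Hfin. induction m as [|m [l Hl]].
  - destruct (Hfin 0) as [l Hl]. exists l. intro x. rewrite <- Hl. split.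
    + intros [i [Hi Hx]]. replace i with 0 in Hx by lia. exact Hx.
    + intros Hx. exists 0. split; [lia|exact Hx].
  - destruct (Hfin (S m)) as [l' Hl']. exists (l ++ l'). intro x.
    rewrite in_app_iff, <- Hl, <- Hl'. split.
    + intros [i [Hi Hx]]. destruct (Nat.eq_dec i (S m)) as [->|Hne]; [right; exact Hx|].
      left. exists i. split; [lia|exact Hx].
    + intros [[i [Hi Hx]]|Hx]; [exists i|exists (S m)]; split; auto; lia.
Qed.

Section BasicCovers.

Context {T P : Type} (D : T -> Prop) (X : P -> Prop) (U : T -> P -> Prop).

Definition covered (A : T -> Prop) (x : P) : Prop := exists a, A a /\ U a x.

Definition is_cover (A : T -> Prop) : Prop :=
  (forall a, A a -> D a) /\ forall x, X x -> covered A x.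

Definition is_open (O : P -> Prop) : Prop :=
  forall x, X x -> O x -> exists a, D a /\ U a x /\ forall y, X y -> U a y -> O y.

Hypothesis U_meet : forall a b, D a -> D b ->
  exists c, D c /\ forall x, X x -> (U c x <-> U a x /\ U b x).
Hypothesis U_cover : forall x, X x -> exists a, D a /\ U a x.

Lemma covered_open (A : T -> Prop) : (forall a, A a -> D a) -> is_open (covered A).
Proof.
  intros HA x _ [a [Ha Uax]]. exists a. split; [auto|]. split; [exact Uax|].
  intros y _ Uay. exists a. auto.
Qed.

Lemma open_and (O1 O2 : P -> Prop) :
  is_open O1 -> is_open O2 -> is_open (fun x => O1 x /\ O2 x).
Proof.
  intros H1 H2 x Hx [O1x O2x].
  destruct (H1 x Hx O1x) as [a1 [Da1 [Ua1 S1]]].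
  destruct (H2 x Hx O2x) as [a2 [Da2 [Ua2 S2]]].
  destruct (U_meet a1 a2 Da1 Da2) as [c [Dc Uc]].
  exists c. split; [exact Dc|]. split; [apply Uc; auto|].
  intros y Hy Ucy. apply Uc in Ucy as [Ua1y Ua2y]; auto.
Qed.

Lemma open_forall_in {A} (l : list A) (O : A -> P -> Prop) :
  (forall s, In s l -> is_open (O s)) -> is_open (fun x => forall s, In s l -> O s x).
Proof.
  induction l as [|s l IH]; intros Hl x Hx Hall.
  - destruct (U_cover x Hx) as [a [Da Uax]]. exists a. split; [exact Da|].
    split; [exact Uax|]. intros y _ _ s [].
  - destruct (open_and (O s) (fun x => forall s', In s' l -> O s' x)
      (Hl s (or_introl eq_refl)) (IH (fun s' Hs' => Hl s' (or_intror Hs'))) x Hx)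
      as [a [Da [Uax Sa]]].
    { split; [apply Hall; left|intros s' Hs'; apply Hall; right]; auto. }
    exists a. split; [exact Da|]. split; [exact Uax|].
    intros y Hy Uay s' Hs'. destruct (Sa y Hy Uay) as [Osy Oly].
    destruct Hs' as [<-|Hs']; auto.
Qed.

Lemma open_exists {A} (O : A -> P -> Prop) :
  (forall c, is_open (O c)) -> is_open (fun x => exists c, O c x).
Proof.
  intros HO x Hx [c Ocx]. destruct (HO c x Hx Ocx) as [a [Da [Uax Sa]]].
  exists a. split; [exact Da|]. split; [exact Uax|]. intros y Hy Uay. exists c. auto.
Qed.

Lemma menger_increasing_opens (O : nat -> nat -> P -> Prop) :
  S_fin is_cover is_cover ->
  (forall n m, is_open (O n m)) ->
  (forall n m m' x, m <= m' -> O n m x -> O n m' x) ->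
  (forall n x, X x -> exists m, O n m x) ->
  exists g : nat -> nat, forall x, X x -> exists n, O n (g n) x.
Proof.
  intros HS Hopen Hmono Hcov.
  pose (A n a := D a /\ exists m, forall x, X x -> U a x -> O n m x).
  destruct (HS A) as [G [HG [_ HGcov]]].
  - intro n. split; [intros a Ha; apply Ha|]. intros x Hx.
    destruct (Hcov n x Hx) as [m Om].
    destruct (Hopen n m x Hx Om) as [a [Da [Uax Sa]]].
    exists a. split; [split; [exact Da|exists m; exact Sa]|exact Uax].
  - assert (Hbound : forall n, exists M,
               forall a, G n a -> forall x, X x -> U a x -> O n M x).
    { intro n. destruct (HG n) as [[l Hl] Hsub].
      destruct (bound_in_list (fun a M => forall x, X x -> U a x -> O n M x) l)
        as [M HM].
      - intros a m m' Hm Sa x Hx Uax. apply (Hmono n m); auto.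
      - intros a Ha. apply Hl, Hsub in Ha. apply Ha.
      - exists M. intros a Ha. apply HM, Hl, Ha. }
    destruct (choice _ Hbound) as [g Hg]. exists g. intros x Hx.
    destruct (HGcov x Hx) as [a [[n Ga] Uax]]. exists n. exact (Hg n a Ga x Hx Uax).
Qed.

Section Play.

Variable sigma : list (T -> Prop) -> T -> Prop.
Variable pieces : list (T -> Prop) -> nat -> T -> Prop.
Hypothesis pieces_finite : forall h n, finite_set (pieces h n).
Hypothesis pieces_sub : forall h n, subset (pieces h n) (sigma h).
Hypothesis pieces_cover : forall h, is_cover (bigunion (pieces h)).

Definition answer (h : list (T -> Prop)) (m : nat) : T -> Prop :=
  partial_union (pieces h) m.

Definition node (s : list nat) : list (T -> Prop) :=
  fold_left (fun h m => h ++ [answer h m]) s [].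

Definition uniformly_covered (c m : nat) (x : P) : Prop :=
  forall s, In s (lists_upto c (S c)) -> covered (answer (node s) m) x.

Definition covered_via (n m : nat) (x : P) : Prop :=
  exists c, uniformly_covered n c x /\ uniformly_covered c m x.

Lemma answer_in_D h m a : answer h m a -> D a.
Proof. intros [i [_ Ha]]. apply (proj1 (pieces_cover h)). exists i. exact Ha. Qed.

Lemma answer_covers_eventually h x : X x -> exists m, covered (answer h m) x.
Proof.
  intros Hx. destruct (proj2 (pieces_cover h) x Hx) as [a [[i Ha] Uax]].
  exists i, a. split; [exists i; split; [lia|exact Ha]|exact Uax].
Qed.

Lemma uniformly_covered_mono c m m' x :
  m <= m' -> uniformly_covered c m x -> uniformly_covered c m' x.
Proof.
  intros Hm Hc s Hs. destruct (Hc s Hs) as [a [Ha Uax]].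
  exists a. split; [exact (partial_union_mono _ m m' Hm a Ha)|exact Uax].
Qed.

Lemma uniformly_covered_anti c c' m x :
  c <= c' -> uniformly_covered c' m x -> uniformly_covered c m x.
Proof.
  intros Hc Hc' s Hs. apply Hc'. apply in_lists_upto in Hs as [Hlen Hs].
  apply in_lists_upto. split; [lia|]. intros y Hy. specialize (Hs y Hy). lia.
Qed.

Lemma uniformly_covered_open c m : is_open (uniformly_covered c m).
Proof.
  apply open_forall_in. intros s _. apply covered_open, answer_in_D.
Qed.

Lemma uniformly_covered_eventually c x : X x -> exists m, uniformly_covered c m x.
Proof.
  intros Hx. apply bound_in_list.
  - intros s m m' Hm [a [Ha Uax]].
    exists a. split; [exact (partial_union_mono _ m m' Hm a Ha)|exact Uax].
  - intros s _. apply answer_covers_eventually, Hx.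
Qed.

Lemma covered_via_open n m : is_open (covered_via n m).
Proof.
  apply open_exists. intro c. apply open_and; apply uniformly_covered_open.
Qed.

Lemma covered_via_mono n m m' x : m <= m' -> covered_via n m x -> covered_via n m' x.
Proof.
  intros Hm [c [Hnc Hcm]]. exists c. split; [exact Hnc|].
  exact (uniformly_covered_mono c m m' x Hm Hcm).
Qed.

Lemma covered_via_eventually n x : X x -> exists m, covered_via n m x.
Proof.
  intros Hx. destruct (uniformly_covered_eventually n x Hx) as [c Hc].
  destruct (uniformly_covered_eventually c x Hx) as [m Hm].
  exists m, c. split; assumption.
Qed.

Lemma history_answers (b : nat -> nat) k :
  history (fun k => answer (node (map b (seq 0 k))) (b k)) k = node (map b (seq 0 k)).
Proof.
  induction k as [|k IH]; [reflexivity|].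
  unfold history in *. rewrite seq_S, !map_app, IH. unfold node.
  rewrite fold_left_app. reflexivity.
Qed.

Lemma II_beats_sigma (g : nat -> nat) :
  (forall x, X x -> exists n, covered_via n (g n) x) ->
  exists F, follows sigma F /\ is_cover (bigunion F).
Proof.
  intros Hg. pose (b i := stage g (S i)).
  exists (fun k => answer (node (map b (seq 0 k))) (b k)). split.
  - intro k. rewrite history_answers. split.
    + apply partial_union_finite. intro i. apply pieces_finite.
    + intros a [i [_ Ha]]. exact (pieces_sub _ i a Ha).
  - split.
    + intros a [k Ha]. exact (answer_in_D _ _ a Ha).
    + intros x Hx.
      destruct (stage_diagonal (fun c m => uniformly_covered c m x) g)
        as [k Hk].
      * intros c c' m. apply uniformly_covered_anti.
      * intros c m m'. apply uniformly_covered_mono.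
      * exact (Hg x Hx).
      * destruct (Hk (map b (seq 0 k))) as [a [Ha Uax]].
        -- apply in_lists_upto. rewrite length_map, length_seq.
           split; [apply le_stage|]. intros y Hy. apply in_map_iff in Hy.
           destruct Hy as [i [<- Hi]]. apply in_seq in Hi.
           pose proof (stage_mono g (S i) k ltac:(lia)). unfold b. lia.
        -- exists a. split; [exists k; exact Ha|exact Uax].
Qed.

End Play.

Theorem not_I_has_winning_of_S_fin :
  S_fin is_cover is_cover -> ~ I_has_winning is_cover is_cover.
Proof.
  intros HS [sigma [Hst Hwin]].
  destruct (choice (fun h F => (forall n, finite_set (F n) /\ subset (F n) (sigma h))
                               /\ is_cover (bigunion F))) as [pieces Hpieces].
  { intro h. exact (HS (fun _ => sigma h) (fun _ => Hst h)). }
  pose proof (fun h n => proj1 (proj1 (Hpieces h) n)) as pieces_finite.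
  pose proof (fun h n => proj2 (proj1 (Hpieces h) n)) as pieces_sub.
  pose proof (fun h => proj2 (Hpieces h)) as pieces_cover.
  destruct (menger_increasing_opens (covered_via pieces) HS) as [g Hg].
  - intros n m. apply covered_via_open, pieces_cover.
  - intros n m m' x. apply covered_via_mono.
  - intros n x. apply covered_via_eventually, pieces_cover.
  - destruct (II_beats_sigma sigma pieces pieces_finite pieces_sub pieces_cover g Hg)
      as [F [HF HFcov]].
    exact (Hwin F HF HFcov).
Qed.

End BasicCovers.

Section PrimeSpectrum.

Context {T : Type} (le : T -> T -> Prop) (p : T).
Hypothesis le_refl : forall x, le x x.
Hypothesis le_trans : forall x y z, le x y -> le y z -> le x z.

Definition prime_not_above (q : T) : Prop := prime_elt le q /\ ~ le p q.

Definition not_below (a q : T) : Prop := ~ le a q.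

Lemma Vp_iff_cover (A : T -> Prop) :
  enough_primes le ->
  Vp le p A <-> is_cover (fun a => le a p) prime_not_above not_below A.
Proof.
  intros Hprimes. split.
  - intros [Hub Hleast]. split; [exact Hub|]. intros q [_ Hpq].
    apply NNPP. intros Hncov. apply Hpq, Hleast. intros a Ha.
    apply NNPP. intros Haq. apply Hncov. exists a. split; assumption.
  - intros [Hub Hcov]. split; [exact Hub|]. intros u Hu.
    apply NNPP. intros Hpu.
    destruct (Hprimes p u Hpu) as [q [Hq [Huq Hpq]]].
    destruct (Hcov q (conj Hq Hpq)) as [a [Ha Haq]].
    apply Haq. exact (le_trans a u q (Hu a Ha) Huq).
Qed.

Lemma not_below_meet (a b m q : T) :
  prime_elt le q -> is_inf le (pair_set a b) m ->
  (not_below m q <-> not_below a q /\ not_below b q).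
Proof.
  intros [_ Hq] Hm. split.
  - intros Hmq. split; intros Hle; apply Hmq.
    + apply (le_trans m a q); [apply Hm; left|]; auto.
    + apply (le_trans m b q); [apply Hm; right|]; auto.
  - intros [Haq Hbq] Hmq. destruct (Hq a b m Hm Hmq); contradiction.
Qed.

Lemma not_below_basis_meet :
  (forall a b, exists m, is_inf le (pair_set a b) m) ->
  forall a b, le a p -> le b p ->
  exists m, le m p /\
    forall q, prime_not_above q -> (not_below m q <-> not_below a q /\ not_below b q).
Proof.
  intros Hinf a b Hap _. destruct (Hinf a b) as [m Hm]. exists m. split.
  - apply (le_trans m a p); [apply Hm; left; reflexivity|exact Hap].
  - intros q [Hq _]. exact (not_below_meet a b m q Hq Hm).
Qed.

Lemma not_below_basis_cover :
  forall q, prime_not_above q -> exists a, le a p /\ not_below a q.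
Proof. intros q [_ Hpq]. exists p. split; [apply le_refl|exact Hpq]. Qed.

End PrimeSpectrum.

Theorem theorem1p1 (T : Type) (le : T -> T -> Prop)
  (Hlat : is_lattice le) (Hprimes : enough_primes le) (p : T) :
  S_fin (Vp le p) (Vp le p) <-> ~ I_has_winning (Vp le p) (Vp le p).
Proof.
  destruct Hlat as [[le_refl [le_trans _]] [_ Hinf]].
  pose proof (fun A => Vp_iff_cover le p le_trans A Hprimes) as HV.
  split.
  - intros HS Hwin.
    apply (not_I_has_winning_of_S_fin _ _ _
             (not_below_basis_meet le p le_trans Hinf)
             (not_below_basis_cover le p le_refl)).
    + exact (S_fin_ext _ _ _ _ HV HV HS).
    + exact (I_has_winning_ext _ _ _ _ HV HV Hwin).
  - apply S_fin_of_not_I_has_winning.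
Qed.
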